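(* Let $X$ be a finite $T_0$ topological space. Then $\Psi(x,y)=|U_y\setminus U_x|$ for all $x,y\in X$.
   Context: For a finite topological space $X$ and $x\in X$, $U_x$ denotes the minimal open set containing $x$ (the intersection of all open sets containing $x$). A nested sequence of open sets around $x$ is a finite sequence $U_0\subsetneq U_1\subsetneq\cdots\subsetneq U_m=X$ of open sets with $U_0=U_x$ such that for each $j$ there is no open set $V$ with $U_j\subsetneq V\subsetneq U_{j+1}$. The furtherness function $\Psi:X\times X\to\{0,1,\dots,|X|-1\}$ is defined by: $\Psi(x,y)$ is the smallest integer $k\ge 0$ such that there exists a nested sequence $(U_j)_{j\ge0}$ of open sets around $x$ with $y\in U_k$. *)

From mathcomp Require Import all_boot.
Set Implicit Arguments. Unset Strict Implicit. Unset Printing Implicit Defensive.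

Section FiniteTop.
Variable T : finType.

(* op is a topology on T (for a finite space, closure under finite unions is
   closure under arbitrary unions). *)
Definition is_topology (op : {set {set T}}) : Prop :=
  [/\ set0 \in op, setT \in op,
      (forall A B, A \in op -> B \in op -> A :|: B \in op) &
      (forall A B, A \in op -> B \in op -> A :&: B \in op)].

Definition is_T0 (op : {set {set T}}) : Prop :=
  forall x y : T, x != y -> exists2 A, A \in op & (x \in A) != (y \in A).

Definition minopen (op : {set {set T}}) (x : T) : {set T} :=
  \bigcap_(A in op | x \in A) A.

Definition open_cover (op : {set {set T}}) (A B : {set T}) : bool :=
  (A \proper B) && [forall V in op, ~~ ((A \proper V) && (V \proper B))].

Definition nested_seq (op : {set {set T}}) (x : T) (s : seq {set T}) : bool :=
  [&& s != [::], all (fun A => A \in op) s,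
      head set0 s == minopen op x, last set0 s == setT &
      sorted (open_cover op) s].

(* Psi(x,y) = k : k is the least index such that some nested sequence around x
   has y in its k-th member. *)
Definition furtherness_is (op : {set {set T}}) (x y : T) (k : nat) : Prop :=
  (exists s, [/\ nested_seq op x s, k < size s & y \in nth set0 s k]) /\
  (forall s k', nested_seq op x s -> k' < size s -> y \in nth set0 s k' -> k <= k').

End FiniteTop.

From mathcomp Require Import all_boot zify.
Set Implicit Arguments. Unset Strict Implicit. Unset Printing Implicit Defensive.

(* In a finite T0 space every open set A strictly inside an open set B can be
   enlarged by a single point b of B \ A: take b with the smallest minimal
   neighbourhood U_b; then T0 forces U_b to lie in A together with b.  Hence
   consecutive members of a nested sequence differ by exactly one point, so the
   k-th member around x has |U_x| + k points; if it contains y it contains U_y,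
   whence k >= |U_y \ U_x|.  Conversely, growing U_x one point at a time up to
   U_x \cup U_y and then to X yields a nested sequence whose member of index
   |U_y \ U_x| is U_x \cup U_y. *)

Section FiniteT0Space.
Variables (T : finType) (op : {set {set T}}).
Hypotheses (top : is_topology op) (T0 : is_T0 op).

Lemma open_setT : setT \in op.
Proof. by case: top. Qed.

Lemma open_setU (A B : {set T}) : A \in op -> B \in op -> A :|: B \in op.
Proof. by case: top => _ _ + _; apply. Qed.

Lemma minopen_open x : minopen op x \in op.
Proof.
case: top => _ oT _ oI.
by apply: (big_ind (fun S => S \in op)) => // A /andP[].
Qed.

Lemma mem_minopen x : x \in minopen op x.
Proof. by apply/bigcapP => A /andP[]. Qed.

Lemma minopen_min x (A : {set T}) : A \in op -> x \in A -> minopen op x \subset A.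
Proof. by move=> oA xA; apply/subsetP => y /bigcapP; apply; rewrite oA. Qed.

Lemma minopen_sub x y : y \in minopen op x -> minopen op y \subset minopen op x.
Proof. exact/minopen_min/minopen_open. Qed.

Lemma minopen_antisym x y :
  y \in minopen op x -> x \in minopen op y -> x = y.
Proof.
move=> yUx xUy; apply/eqP/negPn/negP => /T0[V oV /eqP[]].
apply/idP/idP => [xV | yV].
- exact: subsetP (minopen_min oV xV) y yUx.
- exact: subsetP (minopen_min oV yV) x xUy.
Qed.

Lemma open_setU1 (A B : {set T}) : A \in op -> B \in op -> B :\: A != set0 ->
  exists2 b, b \in B :\: A & b |: A \in op.
Proof.
move=> oA oB /set0Pn[b0 b0BA].
have [b bBA minb] := arg_minnP (fun b => #|minopen op b|) b0BA.
exists b => //.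
have sUbB : minopen op b \subset B by apply: minopen_min; case/setDP: bBA.
have sUbA : minopen op b \subset b |: A.
  apply/subsetP => c cUb; rewrite !inE orbC; have [// | cA /=] := boolP (c \in A).
  have cBA : c \in B :\: A by rewrite inE cA (subsetP sUbB).
  have eqUcb : minopen op c = minopen op b.
    by apply/eqP; rewrite eqEcard minopen_sub ?minb.
  by rewrite eq_sym (minopen_antisym cUb) // eqUcb mem_minopen.
suff -> : b |: A = A :|: minopen op b by exact/open_setU/minopen_open.
apply/eqP; rewrite eqEsubset !subUset sUbA subsetUl subsetUr andbT /=.
by rewrite sub1set inE mem_minopen orbT.
Qed.

Lemma open_cover_setU1 (A : {set T}) b : b \notin A -> open_cover op A (b |: A).
Proof.
move=> bA; rewrite /open_cover properEcard subsetUr cardsU1 bA add1n ltnSn /=.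
apply/forallP => V; apply/implyP => _.
by apply/negP => /andP[/proper_card ltAV /proper_card]; rewrite cardsU1 bA; lia.
Qed.

Lemma card_open_cover (A B : {set T}) :
  A \in op -> B \in op -> open_cover op A B -> #|B| = #|A|.+1.
Proof.
move=> oA oB /andP[ltAB /forallP noV].
have BAn0 : B :\: A != set0 by rewrite setD_eq0; case/andP: ltAB.
have [b /setDP[bB bA] obA] := open_setU1 oA oB BAn0.
have sbAB : b |: A \subset B by rewrite subUset sub1set bB (proper_sub ltAB).
have /andP[ltAbA _] := open_cover_setU1 bA.
have /eqP <- : b |: A == B.
  by rewrite eqEproper sbAB; move: (noV (b |: A)); rewrite obA ltAbA.
by rewrite cardsU1 bA.
Qed.

Lemma open_cover_path_nth d (A : {set T}) s k :
  A \in op -> all (fun B => B \in op) s -> path (open_cover op) A s ->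
  k <= size s -> A \subset nth d (A :: s) k /\ #|nth d (A :: s) k| = #|A| + k.
Proof.
elim: s A k => [|B s IH] A [|k] oA //=; rewrite ?addn0 //.
move=> /andP[oB os] /andP[coverAB pBs] le_ks.
have [sBn cardn] := IH B k oB os pBs le_ks.
split; first by apply: subset_trans sBn; case/andP: coverAB => /proper_sub.
by rewrite cardn (card_open_cover oA oB coverAB) addSnnS.
Qed.

Lemma open_cover_path_exists (A B : {set T}) : A \in op -> B \in op -> A \subset B ->
  exists s, [/\ path (open_cover op) A s, all (fun C => C \in op) s,
               last A s = B & size s = #|B :\: A|].
Proof.
move=> + oB; move Dn : #|B :\: A| => n; elim: n A Dn => [|n IH] A Dn oA sAB.
  exists [::]; split => //=; apply/eqP; rewrite eqEsubset sAB -setD_eq0.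
  by rewrite -cards_eq0 Dn.
have [b /setDP[bB bA] obA] : exists2 b, b \in B :\: A & b |: A \in op.
  by apply: open_setU1; rewrite // -cards_eq0 Dn.
have sbAB : b |: A \subset B by rewrite subUset sub1set bB.
have Dn' : #|B :\: (b |: A)| = n.
  move: Dn; rewrite !cardsDS // cardsU1 bA; have := subset_leq_card sbAB; lia.
have [s [ps os lasts sizes]] := IH _ Dn' obA sbAB.
by exists (b |: A :: s); rewrite /= open_cover_setU1 // ps obA os lasts sizes.
Qed.

Lemma furtherness_witness x y :
  exists s, [/\ nested_seq op x s, #|minopen op y :\: minopen op x| < size s
              & y \in nth set0 s #|minopen op y :\: minopen op x|].
Proof.
set Ux := minopen op x; set W := Ux :|: minopen op y.
have oUx : Ux \in op by exact: minopen_open.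
have oW : W \in op by exact/open_setU/minopen_open.
have [s1 [p1 o1 last1 size1]] := open_cover_path_exists oUx oW (subsetUl _ _).
have [s2 [p2 o2 last2 _]] := open_cover_path_exists oW open_setT (subsetT W).
have -> : #|minopen op y :\: Ux| = size s1 by rewrite size1 setDUl setDv set0U.
exists (Ux :: s1 ++ s2); split.
- by rewrite /nested_seq /= oUx all_cat o1 o2 last_cat last1 last2 cat_path p1 last1 p2 !eqxx.
- by rewrite /= size_cat ltnS leq_addr.
- rewrite -cat_cons nth_cat /= ltnSn -last_nth last1.
  by rewrite inE mem_minopen orbT.
Qed.

Lemma furtherness_lower_bound x y s k :
  nested_seq op x s -> k < size s -> y \in nth set0 s k ->
  #|minopen op y :\: minopen op x| <= k.
Proof.
case: s => [|A s] //= /and5P[_ /= /andP[oA os] /eqP-> _ ps] le_ks yUk.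
have [sUxUk cardUk] := open_cover_path_nth set0 (minopen_open x) os ps le_ks.
have oUk : nth set0 (minopen op x :: s) k \in op.
  case: k le_ks {yUk sUxUk cardUk} => [|k] le_ks; first exact: minopen_open.
  exact: allP os _ (mem_nth _ le_ks).
have := subset_leq_card (setSD (minopen op x) (minopen_min oUk yUk)).
by rewrite (cardsDS sUxUk) cardUk; lia.
Qed.

End FiniteT0Space.

Theorem corollary2p14 (T : finType) (op : {set {set T}}) :
  is_topology op -> is_T0 op ->
  forall x y : T, furtherness_is op x y #|minopen op y :\: minopen op x|.
Proof.
move=> top T0 x y; split; first exact: furtherness_witness.
by move=> s k; apply: furtherness_lower_bound.
Qed.
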